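(* Let $\beta,\gamma\ge0$ with $\beta+\gamma>0$. Let $\mu_{\beta,\gamma}$ be the unique strictly increasing continuous function on $[0,T]$, continuously differentiable on $(0,T]$, with $\mu_{\beta,\gamma}(0)=0$ and $\mu'_{\beta,\gamma}(s)=\frac{\gamma^2}{2\mu_{\beta,\gamma}(s)}+\frac{\sqrt2}{2}\beta$ for $s\in(0,T]$; let $\nu_{\beta,\gamma}(s):=\int_0^s\big[\frac{\sqrt2}{2}\beta\mu_{\beta,\gamma}(r)+\frac{\gamma^2}{2}\big(1+\frac{\sqrt2}{\mu_{\beta,\gamma}(r)}\big)\big]dr$; let $\varphi(s,x):=(x+e)\exp\big(\mu_{\beta,\gamma}(s)\sqrt{2\ln(x+e)}+\nu_{\beta,\gamma}(s)\big)$ and $\psi(x,\mu):=x\exp(\mu\sqrt{2\ln(1+x)})$. Then there exists a constant $K>0$ depending only on $(\beta,\gamma,T)$ such that for all $(s,x)\in[0,T]\times\mathbb R_+$, $$\psi(x,\mu_{\beta,\gamma}(s))\le\varphi(s,x)\le K\psi(x,\mu_{\beta,\gamma}(s))+K.$$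
   Context: $T>0$ is fixed. *)

From HB Require Import structures.
From mathcomp Require Import all_boot all_order all_algebra.
From mathcomp Require Import all_classical all_reals all_analysis.
Set Implicit Arguments. Unset Strict Implicit. Unset Printing Implicit Defensive.
Import Order.TTheory GRing.Theory Num.Theory.
Import numFieldNormedType.Exports.
Local Open Scope classical_set_scope.
Local Open Scope ring_scope.

(* Hypotheses characterizing mu_{beta,gamma} on [0,T]:
   strictly increasing and continuous on [0,T], mu(0)=0,
   mu'(s) = gamma^2/(2 mu(s)) + (sqrt 2/2) beta for s in (0,T)
   (two-sided derivative), and the same value as left derivative at s = T. *)
Definition is_mu (R : realType) (T beta gamma : R) (mu : R -> R) : Prop :=
  [/\ (forall x y, 0 <= x -> x < y -> y <= T -> mu x < mu y),
      {within `[0, T], continuous mu},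
      mu 0 = 0,
      (forall s, 0 < s -> s < T ->
          is_derive s 1 mu (gamma ^+ 2 / (2 * mu s) + Num.sqrt 2 / 2 * beta)) &
      (fun h => h^-1 * (mu (T + h) - mu T)) @ 0^'- -->
          (gamma ^+ 2 / (2 * mu T) + Num.sqrt 2 / 2 * beta)].

Definition nu_fun (R : realType) (beta gamma : R) (mu : R -> R) (s : R) : R :=
  Rintegral (@lebesgue_measure R) `[0, s]
    (fun r => Num.sqrt 2 / 2 * beta * mu r
              + gamma ^+ 2 / 2 * (1 + Num.sqrt 2 / mu r)).

Definition varphi (R : realType) (beta gamma : R) (mu : R -> R) (s x : R) : R :=
  (x + expR 1) * expR (mu s * Num.sqrt (2 * ln (x + expR 1)) + nu_fun beta gamma mu s).

Definition psi (R : realType) (x m : R) : R :=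
  x * expR (m * Num.sqrt (2 * ln (1 + x))).

From HB Require Import structures.
From mathcomp Require Import all_boot all_order all_algebra.
From mathcomp Require Import all_classical all_reals all_analysis.
From mathcomp Require Import ring lra measurable_realfun.
Import Order.TTheory GRing.Theory Num.Theory.
Import numFieldNormedType.Exports.
Local Open Scope classical_set_scope.
Local Open Scope ring_scope.

(* Since ln (1 + x) <= ln (x + e) <= 1 + ln (1 + x) and the square root is
   subadditive, the exponent of varphi exceeds that of psi by at most
   mu(s) sqrt 2 + nu(s); moreover x + e <= (1 + e) x for x >= 1, while for
   x <= 1 both sides are bounded.  So K only has to control mu and nu on
   [0, T]: 0 <= mu s <= mu T by monotonicity, and 0 <= nu s <= nu T because
   the integrand defining nu is nonnegative. *)

Section varphi_mn.
Context {R : realType}.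
Local Notation e := (expR 1 : R).

Definition varphi_mn (m n x : R) : R :=
  (x + e) * expR (m * Num.sqrt (2 * ln (x + e)) + n).

Lemma ler_sqrtD (a b : R) : 0 <= a -> 0 <= b ->
  Num.sqrt (a + b) <= Num.sqrt a + Num.sqrt b.
Proof.
move=> a0 b0.
have sa := sqrtr_ge0 a; have sb := sqrtr_ge0 b.
have ha := sqr_sqrtr a0; have hb := sqr_sqrtr b0.
rewrite -(ger0_norm (addr_ge0 sa sb)) -sqrtr_sqr.
apply: ler_wsqrtr; nra.
Qed.

Lemma expR1_ge2 : 2 <= e.
Proof. by have := expR_ge1Dx (1 : R); rewrite [1 + 1]/2. Qed.

Lemma lnDe_le {x : R} : 0 <= x -> ln (x + e) <= 1 + ln (1 + x).
Proof.
move=> x0; have := expR1_ge2 => e2.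
have -> : 1 + ln (1 + x) = ln (e * (1 + x)) by rewrite lnM ?posrE ?expRK //; lra.
by rewrite ler_ln ?posrE; nra.
Qed.

Lemma sqrt_2lnDe_le {x : R} : 0 <= x ->
  Num.sqrt (2 * ln (x + e)) <= Num.sqrt (2 * ln (1 + x)) + Num.sqrt 2.
Proof.
move=> x0; have l0 : 0 <= ln (1 + x) by apply: ln_ge0; lra.
have : 0 <= 2 * ln (1 + x) by lra.
move/ler_sqrtD => /(_ 2 (ler0n _ 2)); apply: le_trans.
by apply: ler_wsqrtr; have := lnDe_le x0; lra.
Qed.

Lemma psi_le_varphi_mn {m n x : R} : 0 <= m -> 0 <= n -> 0 <= x ->
  psi x m <= varphi_mn m n x.
Proof.
move=> m0 n0 x0; have := expR1_ge2 => e2.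
apply: ler_pM; [lra | exact/ltW/expR_gt0 | lra |].
rewrite ler_expR; suff : m * Num.sqrt (2 * ln (1 + x)) <= m * Num.sqrt (2 * ln (x + e)) by lra.
by apply/ler_wpM2l/ler_wsqrtr => //; rewrite ler_pM2l ?ler_ln ?posrE; lra.
Qed.

Lemma De_mul_expR_le_psi {m M x : R} : 0 <= m -> m <= M -> 0 <= x ->
  (x + e) * expR (m * Num.sqrt (2 * ln (1 + x))) <=
  (1 + e) * (psi x m + expR (M * Num.sqrt 2)).
Proof.
move=> m0 mM x0; have := expR1_ge2 => e2; rewrite /psi.
set P := expR (m * _); have P0 : 0 < P by exact: expR_gt0.
have B0 : 0 < expR (M * Num.sqrt 2) by exact: expR_gt0.
have [x1|x1] := leP 1 x.
  have : (x + e) * P <= ((1 + e) * x) * P by apply: ler_wpM2r; [exact: ltW | nra].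
  nra.
have xP0 : 0 <= e * (x * P) by rewrite !mulr_ge0 //; lra.
suff : P <= expR (M * Num.sqrt 2) by move/(ler_wpM2l (ltW (expR_gt0 1))); nra.
rewrite ler_expR; apply: (@le_trans _ _ (m * Num.sqrt 2)); last first.
  exact: ler_wpM2r (sqrtr_ge0 _) _ _ mM.
apply/ler_wpM2l/ler_wsqrtr => //.
by have := le_ln1Dx (lt_le_trans (ltrN10 R) x0); lra.
Qed.

Lemma varphi_mn_psi_bounds (M N : R) : 0 <= M -> exists2 K, 0 < K &
  forall m n x : R, 0 <= m -> m <= M -> 0 <= n -> n <= N -> 0 <= x ->
    psi x m <= varphi_mn m n x /\ varphi_mn m n x <= K * psi x m + K.
Proof.
move=> M0; set B := expR (M * Num.sqrt 2); set C := expR (M * Num.sqrt 2 + N).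
set A := (1 + e) * C.
have e2 := expR1_ge2; have A0 : 0 < A by rewrite mulr_gt0 ?expR_gt0 //; lra.
have B1 : 1 <= B by rewrite /B -expR0 ler_expR mulr_ge0 ?sqrtr_ge0.
exists (A * B); first by rewrite mulr_gt0 //; lra.
move=> m n x m0 mM n0 nN x0; split; first exact: psi_le_varphi_mn.
set P := expR (m * Num.sqrt (2 * ln (1 + x))).
have varphi_le : varphi_mn m n x <= (x + e) * P * C.
  rewrite /varphi_mn -mulrA -expRD ler_pM2l ?ler_expR; last lra.
  have := ler_wpM2l m0 (sqrt_2lnDe_le x0).
  have := ler_wpM2r (sqrtr_ge0 2) mM; lra.
have le_A : (x + e) * P * C <= A * (psi x m + B).
  rewrite [X in _ <= X]mulrAC; apply: ler_wpM2r; first exact/ltW/expR_gt0.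
  exact: De_mul_expR_le_psi.
have : A * psi x m <= A * B * psi x m.
  by rewrite -mulrA ler_pM2l // ler_peMl // mulr_ge0 ?expR_ge0.
lra.
Qed.

End varphi_mn.

Lemma ge0_fine_leDr (R : numDomainType) (a b : \bar R) :
  (0 <= a)%E -> (0 <= b)%E -> b \is a fin_num -> fine a <= fine (a + b).
Proof.
case: a => [a| |] // a0 b0 bfin; last by move: bfin; rewrite fin_numE => /andP[/addye -> _].
by rewrite -(fineK bfin) -EFinD /= lerDl fine_ge0.
Qed.

Definition nu_integrand {R : realType} (beta gamma : R) (mu : R -> R) (r : R) : R :=
  Num.sqrt 2 / 2 * beta * mu r + gamma ^+ 2 / 2 * (1 + Num.sqrt 2 / mu r).

Section nu_bound.
Context {R : realType} {T beta gamma : R} {mu : R -> R}.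
Hypotheses (hbeta : 0 <= beta) (hmu : is_mu T beta gamma mu).
Implicit Types r s : R.
Local Notation leb := (@lebesgue_measure R).
Local Notation nu_integrand := (nu_integrand beta gamma mu).

Lemma nu_funE (s : R) : nu_fun beta gamma mu s = \int[leb]_(r in `[0, s]) nu_integrand r.
Proof. by []. Qed.

Lemma mu_le {x y : R} : 0 <= x -> x <= y -> y <= T -> mu x <= mu y.
Proof.
case: hmu => inc _ _ _ _ x0; rewrite le_eqVlt => /predU1P[-> //|xy yT].
exact/ltW/inc.
Qed.

Lemma mu_gt0 {s : R} : 0 < s -> s <= T -> 0 < mu s.
Proof. by case: hmu => inc _ mu0 _ _ s0 sT; rewrite -mu0; apply: inc. Qed.

Lemma mu_ge0 {s : R} : 0 <= s -> s <= T -> 0 <= mu s.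
Proof. by case: hmu => _ _ mu0 _ _ s0 sT; rewrite -mu0; apply: mu_le. Qed.

Lemma nu_integrand_ge0 {r : R} : 0 <= r -> r <= T -> 0 <= nu_integrand r.
Proof.
move=> r0 rT; have m0 := mu_ge0 r0 rT.
apply: addr_ge0; apply: mulr_ge0 => //.
- by rewrite mulr_ge0 ?divr_ge0 ?sqrtr_ge0.
- by rewrite divr_ge0 ?sqr_ge0.
- by rewrite addr_ge0 ?divr_ge0 ?sqrtr_ge0.
Qed.

Lemma nu_integrand_le {s r : R} : 0 < s -> s <= r -> r <= T ->
  nu_integrand r <= Num.sqrt 2 / 2 * beta * mu T + gamma ^+ 2 / 2 * (1 + Num.sqrt 2 / mu s).
Proof.
move=> s0 sr rT; have ms := mu_gt0 s0 (le_trans sr rT).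
have mr : mu s <= mu r by apply: mu_le => //; exact: ltW.
apply: lerD; apply: ler_wpM2l.
- by rewrite mulr_ge0 ?divr_ge0 ?sqrtr_ge0.
- by apply: mu_le rT _ => //; exact/ltW/(lt_le_trans s0 sr).
- by rewrite divr_ge0 ?sqr_ge0.
- by rewrite lerD2l ler_wpM2l ?sqrtr_ge0 // lef_pV2 ?posrE // (lt_le_trans ms).
Qed.

Lemma continuous_nu_integrand (r : R) : 0 < r < T -> {for r, continuous nu_integrand}.
Proof.
case/andP=> r0 rT; case: hmu => _ _ _ der _.
have cmu : {for r, continuous mu}.
  by apply/differentiable_continuous/derivable1_diffP; have [] := der r r0 rT.
have mr0 : mu r != 0 by rewrite gt_eqF // mu_gt0 // ltW.
apply: continuousD; first by apply: continuousM => //; exact: cvg_cst.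
apply: continuousM; first exact: cvg_cst.
apply: continuousD; first exact: cvg_cst.
apply: continuousM; [exact: cvg_cst | exact: continuousV].
Qed.

Lemma measurable_nu_integrand : measurable_fun `[0, T] nu_integrand.
Proof.
apply: (@measurable_fun_itv_cc _ _ _ false true).
apply: open_continuous_measurable_fun; first exact: itv_open.
by move=> r; rewrite inE /= in_itv /=; exact: continuous_nu_integrand.
Qed.

Lemma integrable_nu_integrand_tail s : 0 < s -> s <= T ->
  leb.-integrable `]s, T] (EFin \o nu_integrand).
Proof.
move=> s0 sT; have sub : `]s, T] `<=` `[0, T].
  by apply: subset_itvScc; rewrite bnd_simp ?lexx ?ltW.
apply: measurable_bounded_integrable => //.
- by rewrite /= lebesgue_measure_itv /=; case: ifP; rewrite ?ltry.
- exact: measurable_funS measurable_nu_integrand.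
- rewrite /bounded_near; near=> M => r; rewrite /= in_itv /= => /andP[sr rT].
  rewrite ger0_norm ?nu_integrand_ge0 //; last exact/ltW/(lt_trans s0).
  apply: le_trans (nu_integrand_le s0 (ltW sr) rT) _.
  by near: M; apply: nbhs_pinfty_ge; rewrite num_real.
Unshelve. all: by end_near.
Qed.

Lemma nu_ge0 {s} : 0 <= s -> s <= T -> 0 <= nu_fun beta gamma mu s.
Proof.
move=> s0 sT; apply: Rintegral_ge0 => r; rewrite /= in_itv /= => /andP[r0 rs].
by rewrite nu_integrand_ge0 // (le_trans rs).
Qed.

(* [Rintegral] is the [fine] part of the Lebesgue integral, hence 0 on a
   divergent integral; the tail over ]s, T] being finite, the integrals over
   [0, s] and [0, T] diverge together, so no finiteness of nu is needed. *)
Lemma nu_le_integral {s} : 0 <= s -> s <= T ->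
  nu_fun beta gamma mu s <= \int[leb]_(r in `[0, T]) nu_integrand r.
Proof.
have f0 r : `[0, T]%classic r -> (0 <= (nu_integrand r)%:E)%E.
  by rewrite /= in_itv /= lee_fin => /andP[r0 rT]; exact: nu_integrand_ge0.
rewrite le_eqVlt => /predU1P[<- _|s0 sT].
  by rewrite nu_funE set_itv1 Rintegral_set1 Rintegral_ge0 // => r /f0.
have itv_split : `[0, T]%classic = `[0, s] `|` `]s, T] :> set R.
  by rewrite -itv_bndbnd_setU // bnd_simp ltW.
rewrite nu_funE /Rintegral [in X in _ <= X]itv_split ge0_integral_setU //=.
- apply: ge0_fine_leDr; [apply: integral_ge0|apply: integral_ge0|].
  + by move=> r rs; apply: f0; rewrite itv_split; left.
  + by move=> r rs; apply: f0; rewrite itv_split; right.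
  + by apply: integrable_fin_num => //; exact: integrable_nu_integrand_tail.
- by rewrite -itv_split; apply/measurable_EFinP; exact: measurable_nu_integrand.
- by move=> r rsT; apply: f0; rewrite itv_split.
- apply/disj_setPS => r [] /=; rewrite !in_itv /= => /andP[_ rs] /andP[sr _].
  by move: (lt_le_trans sr rs); rewrite ltxx.
Qed.

End nu_bound.

Theorem proposition3p4 (R : realType) (T beta gamma : R) (hT : 0 < T)
  (hbeta : 0 <= beta) (hgamma : 0 <= gamma) (hbg : 0 < beta + gamma)
  (mu : R -> R) (hmu : is_mu T beta gamma mu) :
  exists K : R, 0 < K /\
    forall s x : R, 0 <= s -> s <= T -> 0 <= x ->
      psi x (mu s) <= varphi beta gamma mu s x /\
      varphi beta gamma mu s x <= K * psi x (mu s) + K.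
Proof.
have [K K0 bounds] := varphi_mn_psi_bounds (mu T)
  (\int[lebesgue_measure]_(r in `[0, T]) nu_integrand beta gamma mu r)
  (mu_ge0 hmu (ltW hT) (lexx T)).
exists K; split => // s x s0 sT x0.
exact: bounds (mu_ge0 hmu s0 sT) (mu_le hmu s0 sT (lexx T))
  (nu_ge0 hbeta hmu s0 sT) (nu_le_integral hbeta hmu s0 sT) x0.
Qed.
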